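(* Let $X$, $Y$, $\tilde Y$ be categories and let $\tilde G\colon \tilde Y\to Y$ and $G\colon Y\to X$ be functors. Let $x_0$ be a locally initial object of $X$ and suppose that $y_0$ is an initial object of the full subcategory $Y_G(x_0)$ of $Y$. Suppose that $\tilde G$ admits a left adjoint $\tilde F\colon Y\to\tilde Y$. Then $\tilde F y_0$ is an initial object of the full subcategory $\tilde Y_{G\tilde G}(x_0)$ of $\tilde Y$. Moreover, $\tilde F z$ is a locally initial object of $\tilde Y$ for every locally initial object $z$ of $Y$.
   Context: An object $x_0$ of a category $X$ is locally initial if for every object $x$ of $X$ there exists at most one morphism $x_0\to x$. For a locally initial object $x_0$ of $X$ and a functor $G\colon Y\to X$, $Y_G(x_0)$ denotes the full subcategory of $Y$ consisting of all objects $y$ such that there exists a morphism $x_0\to Gy$ in $X$. (Thus $\tilde Y_{G\tilde G}(x_0)$ consists of all objects $\tilde y$ of $\tilde Y$ admitting a morphism $x_0\to G\tilde G\tilde y$.) *)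

Set Implicit Arguments.
Unset Strict Implicit.

Record Category := {
  Obj :> Type;
  Hom : Obj -> Obj -> Type;
  idm : forall a, Hom a a;
  comp : forall a b e, Hom b e -> Hom a b -> Hom a e;
  comp_assoc : forall a b c d (h : Hom c d) (g : Hom b c) (f : Hom a b),
      comp h (comp g f) = comp (comp h g) f;
  comp_id_l : forall a b (f : Hom a b), comp (idm b) f = f;
  comp_id_r : forall a b (f : Hom a b), comp f (idm a) = f
}.

Arguments Hom {_} _ _.
Arguments idm {_} _.
Arguments comp {_ _ _ _} _ _.

Record Functor (C D : Category) := {
  fobj :> C -> D;
  fmap : forall a b, @Hom C a b -> @Hom D (fobj a) (fobj b);
  fmap_id : forall a, fmap (idm a) = idm (fobj a);
  fmap_comp : forall a b c (g : @Hom C b c) (f : @Hom C a b),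
      fmap (comp g f) = comp (fmap g) (fmap f)
}.

Arguments fmap {C D} _ {a b} _.

Definition locally_initial (C : Category) (x0 : C) : Prop :=
  forall x : C, forall f g : @Hom C x0 x, f = g.

(* Y_G(x0): objects y of Y admitting a morphism x0 -> G y (as a predicate on
   objects; the full subcategory has all morphisms of Y between them). *)
Definition sub_G (X Y : Category) (G : Functor Y X) (x0 : X) : Y -> Prop :=
  fun y => inhabited (@Hom X x0 (G y)).

Definition initial_in_full (C : Category) (P : C -> Prop) (c : C) : Prop :=
  P c /\ forall d : C, P d -> exists f : @Hom C c d, forall g : @Hom C c d, g = f.

(* F : Y -> Yt is left adjoint to G : Yt -> Y, given by a natural unit
   eta : Id => G F which is universal: every y -> G yt factors uniquely
   as G g o eta_y with g : F y -> yt. *)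
Definition is_left_adjoint (Y Yt : Category) (F : Functor Y Yt) (G : Functor Yt Y)
  : Prop :=
  exists eta : forall y : Y, @Hom Y y (G (F y)),
    (forall (a b : Y) (f : @Hom Y a b),
        comp (eta b) f = comp (fmap G (fmap F f)) (eta a)) /\
    (forall (y : Y) (yt : Yt) (f : @Hom Y y (G yt)),
        exists g : @Hom Yt (F y) yt,
          comp (fmap G g) (eta y) = f /\
          forall g' : @Hom Yt (F y) yt, comp (fmap G g') (eta y) = f -> g' = g).

(* A left adjoint F transports universal arrows: a morphism F y -> yt is the
   same as a morphism y -> G yt.  Hence if y0 is initial among the objects of
   a full subcategory closed under outgoing morphisms (such as Y_G(x0)), then
   F y0 is initial among the objects yt with G yt in that subcategory, and if
   z has at most one morphism into each G x, then F z has at most one morphism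
   into each x. *)

Definition closed_under_maps {C : Category} (P : C -> Prop) : Prop :=
  forall a b : C, P a -> @Hom C a b -> P b.

Lemma sub_G_closed_under_maps {X Y : Category} (G : Functor Y X) (x0 : X) :
  closed_under_maps (sub_G G x0).
Proof.
  intros a b [h] f.
  exact (inhabits (comp (fmap G f) h)).
Qed.

Section LeftAdjoint.

Context {Y Yt : Category} {F : Functor Y Yt} {G : Functor Yt Y}.
Hypothesis hadj : is_left_adjoint F G.

Lemma left_adjoint_initial_in_full {P : Y -> Prop} {y0 : Y} :
  closed_under_maps P -> initial_in_full P y0 ->
  initial_in_full (fun yt : Yt => P (G yt)) (F y0).
Proof.
  intros hP [hy0 hinit].
  destruct hadj as [eta [_ huniv]].
  split.
  - exact (hP _ _ hy0 (eta y0)).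
  - intros yt hyt.
    destruct (hinit (G yt) hyt) as [f hf].
    destruct (huniv y0 yt f) as [g [_ hg]].
    exists g.
    intros g'.
    apply hg, hf.
Qed.

Lemma left_adjoint_locally_initial (z : Y) :
  locally_initial z -> locally_initial (F z).
Proof.
  intros hz x f g.
  destruct hadj as [eta [_ huniv]].
  destruct (huniv z x (comp (fmap G f) (eta z))) as [h [_ hh]].
  rewrite (hh f eq_refl).
  symmetry.
  apply hh, hz.
Qed.

End LeftAdjoint.

Theorem theorem2p3 (X Y Yt : Category) (Gt : Functor Yt Y) (G : Functor Y X)
  (x0 : X) (y0 : Y)
  (hx0 : locally_initial x0)
  (hy0 : initial_in_full (sub_G G x0) y0)
  (Ft : Functor Y Yt) (hadj : is_left_adjoint Ft Gt) :
  initial_in_full (fun yt : Yt => inhabited (@Hom X x0 (G (Gt yt)))) (Ft y0) /\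
  (forall z : Y, locally_initial z -> locally_initial (Ft z)).
Proof.
  split.
  - exact (left_adjoint_initial_in_full hadj (sub_G_closed_under_maps G x0) hy0).
  - exact (left_adjoint_locally_initial hadj).
Qed.
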